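(* In the Bernoulli setting with $\mathscr{A}_{\mathrm{sing}},\mathscr{A}_{\mathrm{inv}}$ both nonempty, let $\eta$ be the unique $\mathcal{Q}$-stationary probability measure on $\mathbb{P}^1$. Then $p\times\eta$ is $\bar{\mathcal{Q}}$-stationary and $\bar{\mathcal{Q}}$ is uniformly ergodic: there exist constants $c>0$, $C<\infty$ such that $$\Big\|\bar{\mathcal{Q}}^n\varphi-\int\varphi\,d(p\times\eta)\Big\|_\infty\le Ce^{-cn}\|\varphi\|_\infty\quad\forall n\in\mathbb{N},\ \forall\varphi\in L^\infty(\mathscr{A}\times\mathbb{P}^1).$$ In particular $p\times\eta$ is the unique $\bar{\mathcal{Q}}$-stationary measure.
   Context: $\mathscr{A}=\{1,\dots,k\}=\mathscr{A}_{\mathrm{sing}}\sqcup\mathscr{A}_{\mathrm{inv}}$ both nonempty, $p$ a probability vector with all $p_i>0$, $\underline A=(A_i)$ with $\mathrm{rank}A_i=1$ for $i\in\mathscr{A}_{\mathrm{sing}}$ and $A_i$ invertible for $i\in\mathscr{A}_{\mathrm{inv}}$. Projective action: $\hat A\hat v=\widehat{Av}$ (invertible), constant map to $\widehat{\mathrm{Range}A}$ (rank one). $\mathcal{Q}\psi(\hat v)=\sum_ip_i\psi(\hat A_i\hat v)$ on $L^\infty(\mathbb{P}^1)$; $\bar{\mathcal{Q}}\varphi(j,\hat v)=\sum_ip_i\varphi(i,\hat A_j\hat v)$ on $L^\infty(\mathscr{A}\times\mathbb{P}^1)$. A measure $\nu$ is stationary for an operator $T$ if $\int T\varphi\,d\nu=\int\varphi\,d\nu$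 for all bounded measurable $\varphi$. *)

From HB Require Import structures.
From mathcomp Require Import all_boot all_order all_algebra.
From mathcomp Require Import all_classical all_reals all_analysis.
Set Implicit Arguments. Unset Strict Implicit. Unset Printing Implicit Defensive.
Import Order.TTheory GRing.Theory Num.Theory.
Import numFieldNormedType.Exports.
Local Open Scope classical_set_scope.
Local Open Scope ring_scope.

Section P1.
Variable R : realType.

(* canonical representatives of lines in R^2: unit vectors in the upper
   half-plane (including the positive x-axis, excluding the negative one) *)
Definition p1pred (w : R * R) : bool :=
  (w.1 ^+ 2 + w.2 ^+ 2 == 1) && ((0 < w.2) || ((w.2 == 0) && (0 < w.1))).

Definition P1sig := {w : R * R | p1pred w}.

Lemma p1pred_e1 : p1pred (1, 0).
Proof. by rewrite /p1pred /= expr1n expr0n addr0 eqxx ltr01 eqxx orbT. Qed.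

Definition p1pt : P1sig := exist _ (1, 0) p1pred_e1.

HB.instance Definition _ := Choice.on P1sig.
HB.instance Definition _ := isPointed.Build P1sig p1pt.

Definition P1val (v : P1sig) : R * R := sval v.

Definition P1 := @g_sigma_algebra_preimageType _ P1sig (R * R)%type P1val.

Definition apply2 (M : 'M[R]_2) (w : R * R) : R * R :=
  (M ord0 ord0 * w.1 + M ord0 ord_max * w.2,
   M ord_max ord0 * w.1 + M ord_max ord_max * w.2).

Definition dir (w : R * R) : P1 :=
  let n := Num.sqrt (w.1 ^+ 2 + w.2 ^+ 2) in
  let u := (w.1 / n, w.2 / n) in
  insubd p1pt (if (0 < u.2) || ((u.2 == 0) && (0 < u.1)) then u else (- u.1, - u.2)).

(* the direction of the range of a rank-one matrix: a nonzero column *)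
Definition range_dir (M : 'M[R]_2) : P1 :=
  dir (if (M ord0 ord0, M ord_max ord0) != (0, 0)
       then (M ord0 ord0, M ord_max ord0) else (M ord0 ord_max, M ord_max ord_max)).

Definition pact (M : 'M[R]_2) (v : P1) : P1 :=
  if M \in unitmx then dir (apply2 M (P1val v)) else range_dir M.

End P1.

Definition Alph (k : nat) := 'I_k.+1.
HB.instance Definition _ k := Choice.on (Alph k).
HB.instance Definition _ k := isPointed.Build (Alph k) ord0.
HB.instance Definition _ k := @isMeasurable.Build default_measure_display
  (Alph k) discrete_measurable discrete_measurable0
  discrete_measurableC discrete_measurableU.

Section Ops.
Variables (R : realType) (k : nat) (A : Alph k -> 'M[R]_2) (p : Alph k -> R).

Definition Qop (psi : P1 R -> R) : P1 R -> R :=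
  fun v => \sum_(i : 'I_k.+1) p i * psi (pact (A i) v).

Definition Qbar (phi : Alph k * P1 R -> R) : Alph k * P1 R -> R :=
  fun x => \sum_(i : 'I_k.+1) p i * phi (i, pact (A x.1) x.2).

End Ops.

Definition bounded_fun (T : Type) (R : realType) (f : T -> R) :=
  exists M : R, forall x, `|f x| <= M.

Definition stationary d (T : measurableType d) (R : realType)
  (Top : (T -> R) -> T -> R) (nu : {measure set T -> \bar R}) :=
  forall phi : T -> R, measurable_fun setT phi -> bounded_fun phi ->
    (\int[nu]_x (Top phi x)%:E = \int[nu]_x (phi x)%:E)%E.

From HB Require Import structures.
From mathcomp Require Import all_boot all_order all_algebra.
From mathcomp Require Import all_classical all_reals all_analysis.
From mathcomp Require Import ring.
Import Order.TTheory GRing.Theory Num.Theory.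
Import numFieldNormedType.Exports.
Local Open Scope classical_set_scope.
Local Open Scope ring_scope.

(* A non-invertible letter maps all of P^1 to a single point, so one step of
   Q multiplies the oscillation of a function by at most q, the total weight
   of the invertible letters; q < 1 since some letter is singular. One step
   of Qbar forgets the letter: Qbar^(n+1) phi (j, v) = Q^n g (A_j v), where g
   averages phi over the letter, and by Q-stationarity of eta the mean of phi
   under p x eta is the eta-mean of Q^n g. Hence Qbar^(n+1) phi lies within
   the oscillation 2 |phi| q^n of that mean. Uniqueness follows by letting
   n go to infinity on indicator functions. *)

Section projective_measurability.
Variable R : realType.

Lemma measurable_inv : measurable_fun setT (@GRing.inv R).
Proof.
have -> : [set: R] = [set 0] `|` ~` [set 0] by rewrite setUv.
apply/measurable_funU => //; first exact: measurableC.
split; first exact: measurable_fun_set1.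
apply: measurable_realfun.open_continuous_measurable_fun.
  apply: closed_openC; apply: accessible_closed_set1.
  exact/hausdorff_accessible/Rhausdorff.
by move=> x /set_mem /= /eqP x0; apply: inv_continuous.
Qed.

Lemma measurable_P1val : measurable_fun setT (@P1val R : P1 R -> (R * R)%type).
Proof. by move=> _ B mB; exists B. Qed.

Lemma measurable_fun_P1 d (T : measurableType d) (f : T -> P1 R) :
  measurable_fun setT (@P1val R \o f) -> measurable_fun setT f.
Proof.
move=> mf _ A [B mB <-].
by rewrite setTI [X in measurable X](_ : _ = setT `&` (@P1val R \o f) @^-1` B)//; exact: mf.
Qed.

Let measurable_upper_half :
  measurable_fun setT (fun u : R * R => (0 < u.2) || ((u.2 == 0) && (0 < u.1))).
Proof.
apply: measurable_or.
  exact: measurable_realfun.measurable_fun_ltr (measurable_cst _) measurable_snd.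
apply: measurable_and.
  exact: measurable_realfun.measurable_fun_eqr measurable_snd (measurable_cst _).
exact: measurable_realfun.measurable_fun_ltr (measurable_cst _) measurable_fst.
Qed.

Let measurable_sqnorm : measurable_fun setT (fun w : R * R => w.1 ^+ 2 + w.2 ^+ 2).
Proof.
by apply: measurable_realfun.measurable_funD;
  apply: measurable_realfun.measurable_funX; [exact: measurable_fst|exact: measurable_snd].
Qed.

Lemma measurable_dir : measurable_fun setT (@dir R).
Proof.
apply: measurable_fun_P1.
set n := fun w : R * R => Num.sqrt (w.1 ^+ 2 + w.2 ^+ 2).
set u := fun w : R * R => (w.1 / n w, w.2 / n w).
set U := fun w => if (0 < (u w).2) || (((u w).2 == 0) && (0 < (u w).1))
                  then u w else (- (u w).1, - (u w).2).
have -> : @P1val R \o @dir R = fun w => if p1pred (U w) then U w else (1, 0).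
  by apply/funext => w; rewrite /= /P1val /dir -/n -/u -/U val_insubd.
have mn : measurable_fun setT (fun w => (n w)^-1).
  apply: (measurableT_comp measurable_inv).
  apply: measurableT_comp measurable_sqnorm.
  exact: measurable_realfun.continuous_measurable_fun (@sqrt_continuous R).
have mu : measurable_fun setT u.
  by apply: measurable_fun_pair; apply: measurable_realfun.measurable_funM => //;
    (exact: measurable_fst || exact: measurable_snd).
have mU : measurable_fun setT U.
  apply: measurable_fun_ifT => //; first exact: measurableT_comp measurable_upper_half _.
  apply: measurable_fun_pair; apply: measurableT_comp => //.
    exact: measurableT_comp measurable_fst _.
  exact: measurableT_comp measurable_snd _.
have mp1 : measurable_fun setT (@p1pred R).
  apply: measurable_and => //.
  exact: measurable_realfun.measurable_fun_eqr measurable_sqnorm (measurable_cst _).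
by apply: measurable_fun_ifT => //; exact: measurableT_comp mp1 _.
Qed.

Lemma measurable_apply2 (M : 'M[R]_2) : measurable_fun setT (@apply2 R M).
Proof.
by apply: measurable_fun_pair; apply: measurable_realfun.measurable_funD;
  apply: measurable_realfun.measurable_funM => //;
  (exact: measurable_fst || exact: measurable_snd).
Qed.

Lemma measurable_pact (M : 'M[R]_2) : measurable_fun setT (@pact R M).
Proof.
rewrite /pact; case: (M \in unitmx) => //.
apply: measurableT_comp measurable_dir _.
exact: measurableT_comp (measurable_apply2 M) measurable_P1val.
Qed.

End projective_measurability.

Section probability_integrals.
Context d (T : measurableType d) (R : realType) (mu : probability T R).
Local Open Scope ereal_scope.

Lemma integral_cst_probability (a : R) : \int[mu]_x (cst a x)%:E = a%:E.
Proof.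
rewrite (integral_cst mu measurableT a%:E) -[RHS]mule1.
by congr (_ * _); exact: probability_setT.
Qed.

Lemma integrable_bounded (f : T -> R) (M : R) :
  measurable_fun setT f -> (forall x, (`|f x| <= M)%R) ->
  mu.-integrable setT (EFin \o f).
Proof.
move=> mf fM.
apply: (le_integrable measurableT _ _ (finite_measure_integrable_cst mu M measurableT)).
  exact/measurable_realfun.measurable_EFinP.
by move=> x _ /=; rewrite lee_fin (le_trans (fM x)) ?ler_norm.
Qed.

Lemma abse_sub_integral_le (f : T -> R) (M a B : R) :
  measurable_fun setT f -> (forall x, (`|f x| <= M)%R) ->
  (forall x, (`|a - f x| <= B)%R) ->
  `| a%:E - \int[mu]_x (f x)%:E | <= B%:E.
Proof.
move=> mf fM aB.
have maf : measurable_fun setT (fun x => a - f x)%R.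
  exact: measurable_realfun.measurable_funB.
rewrite -[a%:E]integral_cst_probability -[B%:E]integral_cst_probability.
rewrite -(integralB_EFin measurableT (finite_measure_integrable_cst mu a measurableT)
  (integrable_bounded _ _ mf fM)).
apply: le_trans (le_abse_integral _ _ _) _ => //.
  exact/measurable_realfun.measurable_EFinP.
under eq_integral do rewrite -EFinB abse_EFin.
apply: ge0_le_integral => //.
- exact/measurable_realfun.measurable_EFinP/measurableT_comp.
- exact/measurable_realfun.measurable_EFinP/measurable_cst.
- by move=> x _; rewrite lee_fin aB.
Qed.

End probability_integrals.
Arguments integrable_bounded {d T R} mu {f} M.
Arguments abse_sub_integral_le {d T R} mu {f} M {a B}.

Section letter_space.
Context (R : realType) (k : nat) (p : Alph k -> R).

Definition letter_mean {T : Type} (phi : Alph k * T -> R) : T -> R :=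
  fun v => \sum_(i : Alph k) p i * phi (i, v).

Let measurable_letter_fun (h : Alph k -> R) : measurable_fun setT h.
Proof. by move=> _ B _. Qed.

Lemma measurable_fun_letter_pair d (T : measurableType d) (F : Alph k -> T -> R) :
  (forall j, measurable_fun setT (F j)) ->
  measurable_fun setT (fun x : Alph k * T => F x.1 x.2).
Proof.
move=> mF.
have -> : (fun x : Alph k * T => F x.1 x.2) =
    (fun x => \sum_(j : Alph k) ((x.1 == j)%:R * F j x.2)).
  apply/funext => x; rewrite (bigD1 x.1) //= eqxx mul1r big1 ?addr0 //.
  by move=> j; rewrite eq_sym => /negbTE ->; rewrite mul0r.
apply: measurable_fun_approximation.measurable_sum => j.
apply: measurable_realfun.measurable_funM.
  exact: (measurableT_comp (measurable_letter_fun (fun a => (a == j)%:R))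
    measurable_fst).
exact: (measurableT_comp (mF j) measurable_snd).
Qed.

Lemma measurable_letter_mean d (T : measurableType d) (phi : Alph k * T -> R) :
  measurable_fun setT phi -> measurable_fun setT (letter_mean phi).
Proof.
move=> mphi; apply: measurable_fun_approximation.measurable_sum => i.
apply: measurable_realfun.measurable_funM => //.
by apply: (measurableT_comp mphi); exact: measurable_fun_pair.
Qed.

Variable P : probability (Alph k) R.
Hypothesis P_atom : forall i, P [set i] = (p i)%:E.
Local Open Scope ereal_scope.

Lemma integral_letters (h : Alph k -> R) :
  \int[P]_x (h x)%:E = (\sum_(i : Alph k) p i * h i)%:E.
Proof.
have -> : (fun x => (h x)%:E) =
    (fun x => \sum_(i : Alph k) ((h i)%:E * (\1_[set i] x)%:E)).
  apply/funext => x; rewrite (bigD1 x) //= big1 ?adde0.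
    by rewrite indicE mem_set // mule1.
  by move=> i /negbTE ix; rewrite indicE memNset ?mule0// => /= xi; rewrite xi eqxx in ix.
rewrite integral_sum //; last first.
  move=> i; apply: (integrable_bounded P `|h i|%R) => // x.
  by rewrite normrM indicE; case: (x \in _); rewrite ?normr1 ?normr0 ?mulr1 ?mulr0.
rewrite -sumEFin; apply: eq_bigr => i _.
rewrite integralZl //; last first.
  apply: (integrable_bounded P 1%R) => // x.
  by rewrite indicE; case: (x \in _); rewrite ?normr1 ?normr0.
rewrite integral_indic // setIT EFinM muleC.
by congr (_ * _); exact: P_atom.
Qed.

Context d (T : measurableType d) (eta : probability T R).

Lemma product_probability_setT : (P \x eta) setT = 1.
Proof.
rewrite -setXTT product_measure1E // -[RHS]mule1.
by congr (_ * _); exact: probability_setT.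
Qed.

Lemma integral_product_letters (f : Alph k * T -> R) (M : R) :
  measurable_fun setT f -> (forall x, (`|f x| <= M)%R) ->
  \int[P \x eta]_z (f z)%:E = \int[eta]_y (letter_mean f y)%:E.
Proof.
move=> mf fM.
have fi : (P \x eta).-integrable setT (EFin \o f).
  apply: measurable_bounded_integrable => //.
    by rewrite [X in X < _](_ : _ = 1) ?ltry //; exact: product_probability_setT.
  exists M; split; first exact: num_real.
  by move=> y My x _ /=; rewrite (le_trans (fM x)) ?ltW.
rewrite -(integral21_prod_meas1 fi).
by apply: eq_integral => y _; rewrite /fubini_G integral_letters.
Qed.

End letter_space.
Arguments letter_mean {R k} p {T}.
Arguments measurable_fun_letter_pair {R k d T}.
Arguments measurable_letter_mean {R k} p {d T phi}.
Arguments integral_product_letters {R k p P} P_atom {d T} eta {f M}.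

Section bounded_operator_iterates.
Context d (T : measurableType d) (R : realType) (Top : (T -> R) -> T -> R).
Hypothesis measurable_Top :
  forall phi, measurable_fun setT phi -> measurable_fun setT (Top phi).
Hypothesis Top_le :
  forall phi M, (forall x, `|phi x| <= M) -> forall x, `|Top phi x| <= M.

Lemma measurable_iter n (phi : T -> R) :
  measurable_fun setT phi -> measurable_fun setT (iter n Top phi).
Proof. by move=> mphi; elim: n => //= n; exact: measurable_Top. Qed.

Lemma iter_le n (phi : T -> R) (M : R) :
  (forall x, `|phi x| <= M) -> forall x, `|iter n Top phi x| <= M.
Proof. by move=> phiM; elim: n => //= n; exact: Top_le. Qed.

Lemma stationary_iter (nu : {measure set T -> \bar R}) : stationary Top nu ->
  forall n (phi : T -> R) (M : R), measurable_fun setT phi ->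
  (forall x, `|phi x| <= M) -> (\int[nu]_x (iter n Top phi x)%:E = \int[nu]_x (phi x)%:E)%E.
Proof.
move=> stat n phi M mphi phiM; elim: n => //= n <-.
apply: stat; first exact: measurable_iter.
by exists M; exact: iter_le.
Qed.

End bounded_operator_iterates.
Arguments measurable_iter {d T R Top}.
Arguments iter_le {d T R Top}.
Arguments stationary_iter {d T R Top} measurable_Top Top_le {nu}.

Section weighted_average.
Context (R : realType) (I : finType) (p : I -> R).
Hypothesis p_ge0 : forall i, 0 <= p i.

Lemma normr_wavg_le (h : I -> R) M : \sum_i p i = 1 ->
  (forall i, `|h i| <= M) -> `|\sum_i p i * h i| <= M.
Proof.
move=> p_sum1 hM; apply: le_trans (ler_norm_sum _ _ _) _.
apply: le_trans (_ : \sum_i p i * M <= M).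
  by apply: ler_sum => i _; rewrite normrM ger0_norm // ler_wpM2l.
by rewrite -mulr_suml p_sum1 mul1r.
Qed.

Context (T : Type) (f : I -> T -> T).

Definition avg_op (h : T -> R) : T -> R := fun v => \sum_i p i * h (f i v).

Lemma oscillation_iter_avg_op (U : pred I) (h : T -> R) M :
  (forall i, ~~ U i -> forall u w, f i u = f i w) -> (forall x, `|h x| <= M) ->
  forall n u w, `|iter n avg_op h u - iter n avg_op h w|
                <= 2 * M * (\sum_(i | U i) p i) ^+ n.
Proof.
move=> fU hM; elim=> [|n IH] u w /=.
  rewrite expr0 mulr1 mulr2n mulrDl mul1r.
  exact: le_trans (ler_normB _ _) (lerD (hM u) (hM w)).
rewrite /avg_op -sumrB exprS mulrCA mulr_suml [leRHS]big_mkcond /=.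
apply: (le_trans (ler_norm_sum _ _ _)); apply: ler_sum => i _.
rewrite -mulrBr normrM ger0_norm //; case: ifPn => Ui.
  exact: ler_wpM2l (IH _ _).
by rewrite (fU i Ui u w) subrr normr0 mulr0.
Qed.

End weighted_average.
Arguments normr_wavg_le {R I p} p_ge0 {h M}.
Arguments oscillation_iter_avg_op {R I p} p_ge0 {T} f U {h M}.

Lemma expr_predn_le_expR (R : realType) (q : R) n : 0 <= q <= 1 ->
  q ^+ n.-1 <= expR (1 - q) * expR (- (1 - q) * n%:R).
Proof.
move=> /andP[q_ge0 q_le1]; case: n => [|n].
  rewrite mulr0 expR0 mulr1 expr0.
  by apply: le_trans (expR_ge1Dx _); rewrite lerDl subr_ge0.
rewrite -expRD -natr1 mulrDr mulr1 addrCA subrr addr0 opprB expRM_natr.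
apply: lerXn2r; rewrite ?nnegrE ?expR_ge0 //.
by have := expR_ge1Dx (q - 1); rewrite addrC subrK.
Qed.

Lemma le0_geometric (R : realType) (x C q : R) :
  `|q| < 1 -> (forall n, x <= C * q ^+ n) -> x <= 0.
Proof.
move=> q_lt1 x_le.
apply: (cvgr_to_ge (F := \oo) (f := fun n => C * q ^+ n)); last exact: nearW.
by rewrite -(mulr0 C); apply: cvgMl_tmp; exact: cvg_expr.
Qed.
Arguments le0_geometric {R x C q}.

Section projective_operators.
Context (R : realType) (k : nat) (A : Alph k -> 'M[R]_2) (p : Alph k -> R).

Lemma measurable_Qop (h : P1 R -> R) :
  measurable_fun setT h -> measurable_fun setT (Qop A p h).
Proof.
move=> mh; apply: measurable_fun_approximation.measurable_sum => i.
apply: measurable_realfun.measurable_funM => //.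
exact: (measurableT_comp mh (measurable_pact _ _)).
Qed.

Lemma measurable_Qbar (phi : Alph k * P1 R -> R) :
  measurable_fun setT phi -> measurable_fun setT (Qbar A p phi).
Proof.
move=> mphi.
apply: (measurable_fun_letter_pair (fun j v => letter_mean p phi (pact (A j) v))) => j.
exact: (measurableT_comp (measurable_letter_mean p mphi) (measurable_pact _ _)).
Qed.

Lemma letter_mean_iter_Qbar n (phi : Alph k * P1 R -> R) :
  letter_mean p (iter n (Qbar A p) phi) = iter n (Qop A p) (letter_mean p phi).
Proof. by elim: n => //= n <-. Qed.

Lemma iterS_Qbar n (phi : Alph k * P1 R -> R) j v :
  iter n.+1 (Qbar A p) phi (j, v) =
  iter n (Qop A p) (letter_mean p phi) (pact (A j) v).
Proof. by rewrite -letter_mean_iter_Qbar. Qed.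

Definition unit_weight := \sum_(i | A i \in unitmx) p i.

Hypotheses (p_ge0 : forall i, 0 <= p i) (p_sum1 : \sum_i p i = 1).

Lemma normr_letter_mean_le (phi : Alph k * P1 R -> R) M :
  (forall x, `|phi x| <= M) -> forall v, `|letter_mean p phi v| <= M.
Proof. by move=> phiM v; apply: normr_wavg_le. Qed.

Lemma normr_Qop_le (h : P1 R -> R) M :
  (forall x, `|h x| <= M) -> forall x, `|Qop A p h x| <= M.
Proof. by move=> hM x; apply: normr_wavg_le. Qed.

Lemma normr_Qbar_le (phi : Alph k * P1 R -> R) M :
  (forall x, `|phi x| <= M) -> forall x, `|Qbar A p phi x| <= M.
Proof. by move=> phiM x; apply: normr_wavg_le. Qed.

Lemma oscillation_iter_Qop (h : P1 R -> R) M : (forall x, `|h x| <= M) ->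
  forall n u w, `|iter n (Qop A p) h u - iter n (Qop A p) h w|
                <= 2 * M * unit_weight ^+ n.
Proof.
move=> hM; apply: (oscillation_iter_avg_op p_ge0 (fun i => pact (A i))) => // i.
move=> /negbTE i_sing u w.
by rewrite /pact i_sing.
Qed.

Lemma unit_weight_ge0 : 0 <= unit_weight.
Proof. exact: sumr_ge0. Qed.

Lemma unit_weight_lt1 :
  (forall i, 0 < p i) -> (exists i, A i \notin unitmx) -> unit_weight < 1.
Proof.
move=> p_gt0 [i0 i0_sing].
rewrite -p_sum1 (bigID (fun i => A i \in unitmx)) /= ltrDl (bigD1 i0) //=.
apply: (lt_le_trans (p_gt0 i0)); rewrite lerDl.
by apply: sumr_ge0.
Qed.

End projective_operators.
Arguments unit_weight {R k} A p.
Arguments measurable_Qop {R k} A p [h].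
Arguments measurable_Qbar {R k} A p [phi].
Arguments normr_letter_mean_le {R k p} p_ge0 p_sum1 [phi M].
Arguments normr_Qop_le {R k A p} p_ge0 p_sum1 [h M].
Arguments normr_Qbar_le {R k A p} p_ge0 p_sum1 [phi M].
Arguments unit_weight_lt1 {R k A p} p_ge0 p_sum1.

Section stationary_measure.
Context (R : realType) (k : nat) (A : Alph k -> 'M[R]_2) (p : Alph k -> R)
  (P : probability (Alph k) R) (eta : probability (P1 R) R).
Hypotheses (p_ge0 : forall i, 0 <= p i) (p_sum1 : \sum_i p i = 1).
Hypothesis P_atom : forall i, P [set i] = (p i)%:E.
Hypothesis eta_stationary : stationary (Qop A p) eta.
Local Notation q := (unit_weight A p).

Lemma Qbar_stationary : stationary (Qbar A p) (P \x eta)%E.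
Proof.
move=> phi mphi [M phiM].
rewrite (integral_product_letters P_atom eta (measurable_Qbar A p mphi)
  (normr_Qbar_le p_ge0 p_sum1 phiM)).
rewrite (integral_product_letters P_atom eta mphi phiM).
exact: (eta_stationary (letter_mean p phi) (measurable_letter_mean p mphi)
  (ex_intro _ M (normr_letter_mean_le p_ge0 p_sum1 phiM))).
Qed.

Lemma iter_Qbar_deviation n (phi : Alph k * P1 R -> R) M :
  measurable_fun setT phi -> (forall x, `|phi x| <= M) -> forall x,
  (`|(iter n (Qbar A p) phi x)%:E - \int[P \x eta]_z (phi z)%:E|
     <= (2 * M * q ^+ n.-1)%:E)%E.
Proof.
move=> mphi phiM [j v].
rewrite (integral_product_letters P_atom eta mphi phiM).
have mg := measurable_letter_mean p mphi.
have gM := normr_letter_mean_le p_ge0 p_sum1 phiM.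
case: n => [|n].
  apply: (abse_sub_integral_le eta M mg gM) => w.
  rewrite expr0 mulr1 mulr2n mulrDl mul1r.
  exact: le_trans (ler_normB _ _) (lerD (phiM _) (gM w)).
have QopM := normr_Qop_le (A := A) p_ge0 p_sum1.
rewrite iterS_Qbar -(stationary_iter (measurable_Qop A p) QopM eta_stationary n _ _ mg gM).
apply: (abse_sub_integral_le eta M (measurable_iter (measurable_Qop A p) n _ mg)
  (iter_le QopM n _ _ gM)) => w.
exact: oscillation_iter_Qop.
Qed.

Lemma Qbar_stationary_unique (nu : probability (Alph k * P1 R)%type R) :
  q < 1 -> stationary (Qbar A p) nu ->
  forall S, measurable S -> nu S = (P \x eta)%E S.
Proof.
move=> q_lt1 nu_stationary S mS.
pose phi : Alph k * P1 R -> R := \1_S.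
have mphi : measurable_fun setT phi by apply: measurable_realfun.measurable_indic.
have phi_le1 x : `|phi x| <= 1.
  by rewrite /phi indicE; case: (_ \in _); rewrite ?normr1 ?normr0.
have integral_phi (mu : {measure set (Alph k * P1 R)%type -> \bar R}) :
  (\int[mu]_x (phi x)%:E = mu S)%E by rewrite integral_indic // setIT.
have fin_nu : nu S \is a fin_num by apply: fin_num_measure.
have fin_prod : (P \x eta)%E S \is a fin_num.
  rewrite ge0_fin_numE ?measure_ge0 //; apply: (@le_lt_trans _ _ 1%E); last exact: ltry.
  apply: le_trans (le_measure _ (mem_set mS) (mem_set measurableT) (@subsetT _ S)) _.
  by rewrite [leLHS](_ : _ = 1%E) //; exact: product_probability_setT.
set b := fine ((P \x eta)%E S).
have dev n : `|fine (nu S) - b| <= 2 * q ^+ n.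
  have near_b x : `|b - iter n.+1 (Qbar A p) phi x| <= 2 * q ^+ n.
    have := iter_Qbar_deviation n.+1 _ _ mphi phi_le1 x.
    rewrite integral_phi [X in `|_ - X|%E](_ : _ = b%:E); last by rewrite fineK.
    by rewrite -EFinB abse_EFin lee_fin mulr1 distrC.
  have QbarM := normr_Qbar_le (A := A) p_ge0 p_sum1.
  have := abse_sub_integral_le nu 1
    (measurable_iter (measurable_Qbar A p) n.+1 _ mphi) (iter_le QbarM n.+1 _ _ phi_le1) near_b.
  rewrite (stationary_iter (measurable_Qbar A p) QbarM nu_stationary n.+1 _ _ mphi phi_le1).
  rewrite integral_phi [X in `|_ - X|%E](_ : _ = (fine (nu S))%:E); last by rewrite fineK.
  by rewrite -EFinB abse_EFin lee_fin distrC.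
have q_norm : `|q| < 1 by rewrite ger0_norm // unit_weight_ge0.
move: (le0_geometric q_norm dev); rewrite normr_le0 subr_eq0 => /eqP nuS_eq.
by rewrite -(fineK fin_nu) nuS_eq /b fineK.
Qed.

Lemma iter_Qbar_exp_deviation n (phi : Alph k * P1 R -> R) M :
  q < 1 -> measurable_fun setT phi -> (forall x, `|phi x| <= M) -> forall x,
  (`|(iter n (Qbar A p) phi x)%:E - \int[P \x eta]_z (phi z)%:E|
     <= (2 * expR (1 - q) * expR (- (1 - q) * n%:R) * M)%:E)%E.
Proof.
move=> q_lt1 mphi phiM x.
apply: le_trans (iter_Qbar_deviation n _ _ mphi phiM x) _.
have M_ge0 : 0 <= M := le_trans (normr_ge0 _) (phiM x).
have -> : 2 * expR (1 - q) * expR (- (1 - q) * n%:R) * M =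
          2 * M * (expR (1 - q) * expR (- (1 - q) * n%:R)) by ring.
rewrite lee_fin ler_wpM2l ?mulr_ge0 // expr_predn_le_expR //.
by apply/andP; split; [exact: unit_weight_ge0|exact: ltW].
Qed.

End stationary_measure.

Theorem corollary3p1 (R : realType) (k : nat)
  (A : Alph k -> 'M[R]_2) (p : Alph k -> R)
  (P : probability (Alph k) R) (eta : probability (P1 R) R) :
  (forall i : Alph k, \rank (A i) = 1%N \/ A i \in unitmx) ->
  (exists i : Alph k, \rank (A i) = 1%N) ->
  (exists i : Alph k, A i \in unitmx) ->
  (forall i : Alph k, 0 < p i) ->
  \sum_(i : Alph k) p i = 1 ->
  (forall i : Alph k, P [set i] = (p i)%:E) ->
  stationary (Qop A p) eta ->
  stationary (Qbar A p) (P \x eta)%E /\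
  (exists c C : R, 0 < c /\ 0 <= C /\
     forall (n : nat) (phi : (Alph k * P1 R)%type -> R),
       measurable_fun setT phi ->
       forall M : R, (forall x, `|phi x| <= M) ->
       forall x, (`| (iter n (Qbar A p) phi x)%:E
                     - \int[(P \x eta)%E]_z (phi z)%:E | <=
                  (C * expR (- c * n%:R) * M)%:E)%E) /\
  (forall nu : probability (Alph k * P1 R)%type R,
     stationary (Qbar A p) nu ->
     forall S, measurable S -> nu S = (P \x eta)%E S).
Proof.
move=> _ [i0 rank_i0] _ p_gt0 p_sum1 P_atom eta_stationary.
have p_ge0 i : 0 <= p i := ltW (p_gt0 i).
have q_lt1 : unit_weight A p < 1.
  apply: (unit_weight_lt1 p_ge0 p_sum1 p_gt0); exists i0.
  by apply/negP => /mxrank_unit; rewrite rank_i0.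
split; first exact: Qbar_stationary.
split; last by move=> nu; exact: Qbar_stationary_unique.
exists (1 - unit_weight A p), (2 * expR (1 - unit_weight A p)).
split; first by rewrite subr_gt0.
split; first by rewrite mulr_ge0 ?expR_ge0.
by move=> n phi mphi M phiM; exact: iter_Qbar_exp_deviation.
Qed.
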